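(* For every odd integer $s\ge5$ there exists a linear $(2,s-1,s,2)$-AONT.
   Context: A linear $(t_i,t_o,s,q)$-AONT is given by an invertible $s\times s$ matrix $M$ over $\mathbb{F}_q$ defining the map $\mathbf{x}\mapsto\mathbf{y}=\mathbf{x}M^{-1}$ on row vectors of $\mathbb{F}_q^s$, such that for every set $I$ of $t_i$ input coordinates and every set $J$ of $s-t_o$ output coordinates, the pair $((x_i)_{i\in I},(y_j)_{j\in J})$ takes every value in $\mathbb{F}_q^{t_i+s-t_o}$ equally often as $\mathbf{x}$ ranges over $\mathbb{F}_q^s$. Equivalently, $M$ is invertible and every $t_o\times t_i$ submatrix of $M$ has rank $t_i$. *)

From mathcomp Require Import all_boot all_algebra.
Set Implicit Arguments. Unset Strict Implicit. Unset Printing Implicit Defensive.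
Import GRing.Theory.
Local Open Scope ring_scope.

(* A linear (t_i, t_o, s, q)-AONT over a finite field F (with #|F| = q) is an
   invertible s x s matrix M such that every t_o x t_i submatrix has rank t_i. *)
Definition is_linear_AONT (F : finFieldType) (ti to s : nat) (M : 'M[F]_s) : Prop :=
  M \in unitmx /\
  forall (rows : 'I_to -> 'I_s) (cols : 'I_ti -> 'I_s),
    injective rows -> injective cols -> \rank (mxsub rows cols M) = ti.

From mathcomp Require Import all_boot all_algebra zify.
Import GRing.Theory.
Set Implicit Arguments.
Unset Strict Implicit.
Unset Printing Implicit Defensive.

(* The matrix has columns e_j + e_(j+1) for j < n and e_0 + e_2 + e_n, where
   s = n + 1.  If v M = 0 then v_(j+1) = - v_j, so v alternates in sign; as n
   is even the last column then gives 3 v_0 = 0, which forces v = 0 in any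
   field where 3 != 0, e.g. F_2.
   A choice of s - 1 rows omits a single row, so the selected two columns keep
   rank 2 once every nonzero combination of them has two nonzero entries.  For
   a 0/1 matrix this holds when every column has two ones and any two columns
   differ in two rows, which is read off the supports directly. *)

Lemma inj_ordS_meets m (f : 'I_m -> 'I_m.+1) (A : {set 'I_m.+1}) :
  injective f -> 1 < #|A| -> exists k, f k \in A.
Proof.
move=> f_inj A_gt1.
have [k | missA] := pickP (fun k => f k \in A); first by exists k.
have codomC : codom f \subset ~: A.
  by apply/subsetP => _ /codomP[k ->]; rewrite inE missA.
exfalso; move: (subset_leq_card codomC).
by rewrite card_codom // -(leq_add2l #|A|) cardsC !card_ord; lia.
Qed.

Lemma card_gt1_inord n (A : {set 'I_n.+1}) r1 r2 :
  r1 <= n -> r2 <= n -> r1 != r2 -> inord r1 \in A -> inord r2 \in A ->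
  1 < #|A|.
Proof.
move=> r1n r2n r12 r1A r2A; apply/card_gt1P; exists (inord r1), (inord r2).
by rewrite -val_eqE /= !inordK.
Qed.

Definition aont_supp (n j : nat) : seq nat :=
  if j == n then [:: 0; 2; n] else [:: j; j.+1].

Lemma aont_supp_uniq n j : 2 < n -> uniq (aont_supp n j).
Proof. by rewrite /aont_supp; case: eqP => _ /=; rewrite !inE; lia. Qed.

Lemma aont_supp_le n j k :
  2 < n -> j <= n -> k \in aont_supp n j -> k <= n.
Proof. by rewrite /aont_supp; case: eqP; rewrite !inE; lia. Qed.

Lemma card_aont_supp_gt1 n (j : 'I_n.+1) :
  0 < n -> 1 < #|[set i : 'I_n.+1 | (i : nat) \in aont_supp n j]|.
Proof.
have := ltn_ord j; rewrite /aont_supp; case: eqP => j_n jn n_gt0.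
  by apply: (@card_gt1_inord _ _ 0 n); rewrite ?inE ?inordK; lia.
by apply: (@card_gt1_inord _ _ j j.+1); rewrite ?inE ?inordK; lia.
Qed.

Lemma card_aont_supp_diff_gt1 n (j k : 'I_n.+1) : 3 < n -> j != k ->
  1 < #|[set i : 'I_n.+1 |
         ((i : nat) \in aont_supp n j) != ((i : nat) \in aont_supp n k)]|.
Proof.
move=> n_gt3; wlog jk : j k / j < k => [wlog_jk | _].
  case: (ltngtP j k) => [jk | kj | /val_inj->]; last by rewrite eqxx.
    exact: wlog_jk.
  under eq_finset => i do rewrite eq_sym.
  by move=> jk; apply: wlog_jk kj _; rewrite eq_sym.
have kn := ltn_ord k; rewrite /aont_supp ifN; last by apply/eqP; lia.
case: eqP => [k_n | k_neq_n].
- have [j0 | [j1 | [j_last | j_mid]]] :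
      j = 0 :> nat \/ j = 1 :> nat \/ j = n.-1 :> nat \/ 1 < j < n.-1 by lia.
  + by apply: (@card_gt1_inord _ _ 1 2); rewrite ?inE ?inordK; lia.
  + by apply: (@card_gt1_inord _ _ 0 1); rewrite ?inE ?inordK; lia.
  + by apply: (@card_gt1_inord _ _ 0 j); rewrite ?inE ?inordK; lia.
  + by apply: (@card_gt1_inord _ _ 0 j.+1); rewrite ?inE ?inordK; lia.
- by apply: (@card_gt1_inord _ _ j k.+1); rewrite ?inE ?inordK; lia.
Qed.

Section LinearAlgebra.
Local Open Scope ring_scope.

Lemma sum_ord_mem_nat (R : nmodType) n (f : 'I_n.+1 -> R) (s : seq nat) :
  uniq s -> (forall k, k \in s -> k <= n)%N ->
  \sum_(i < n.+1 | (i : nat) \in s) f i = \sum_(k <- s) f (inord k).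
Proof.
move=> s_uniq s_le; rewrite -(big_map inord predT) big_uniq.
  apply: eq_bigl => i; apply/idP/mapP => [i_s | [k k_s ->]].
    by exists (i : nat); rewrite ?inord_val.
  by rewrite inordK ?ltnS ?s_le.
rewrite map_inj_in_uniq // => k1 k2 /s_le k1n /s_le k2n /eqP.
by rewrite -val_eqE /= !inordK // => /eqP.
Qed.

Variable F : fieldType.

Lemma mxrank_ker0 m n (A : 'M[F]_(m, n)) :
  (forall x : 'cV_n, A *m x = 0 -> x = 0) -> \rank A = n.
Proof.
move=> kerA; rewrite -mxrank_tr; apply/eqP/inj_row_free => v.
move/(congr1 trmx); rewrite trmx_mul trmxK trmx0 => /kerA/(congr1 trmx).
by rewrite trmxK trmx0.
Qed.

Definition cv_support m (u : 'cV[F]_m) : {set 'I_m} := [set i | u i 0 != 0].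

Lemma mxrank_rowsub_inj m n (A : 'M[F]_(m.+1, n)) (f : 'I_m -> 'I_m.+1) :
  injective f ->
  (forall x : 'cV_n, x != 0 -> (1 < #|cv_support (A *m x)|)%N) ->
  \rank (rowsub f A) = n.
Proof.
move=> f_inj spread; apply: mxrank_ker0 => x; rewrite mul_rowsub_mx => Ax0.
apply/eqP; apply: contraT => /spread /(inj_ordS_meets f_inj) [k].
have /matrixP/(_ k 0) := Ax0; rewrite mxE [RHS]mxE => Afk0.
by rewrite inE Afk0 eqxx.
Qed.

Definition incidence_mx m n (S : 'I_m -> 'I_n -> bool) : 'M[F]_(m, n) :=
  \matrix_(i, j) (S i j)%:R.

Lemma card_support_incidence_colsub2 m n (S : 'I_m -> 'I_n -> bool)
    (cols : 'I_2 -> 'I_n) (x : 'cV[F]_2) :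
  injective cols ->
  (forall j, 1 < #|[set i | S i j]|)%N ->
  (forall j k, j != k -> 1 < #|[set i | S i j != S i k]|)%N ->
  x != 0 -> (1 < #|cv_support (colsub cols (incidence_mx S) *m x)|)%N.
Proof.
move=> cols_inj col_gt1 diff_gt1 x_neq0.
set a := cols 0; set b := cols 1; set x0 := x 0 0; set x1 := x 1 0.
have entry i : (colsub cols (incidence_mx S) *m x) i 0
               = (S i a)%:R * x0 + (S i b)%:R * x1.
  have lift01 : lift ord0 ord0 = 1 :> 'I_2 by exact: val_inj.
  by rewrite mxE big_ord_recl big_ord1 !mxE lift01.
have support_ge (T : {set 'I_m}) : (1 < #|T|)%N ->
    (forall i, i \in T -> (S i a)%:R * x0 + (S i b)%:R * x1 != 0) ->
    (1 < #|cv_support (colsub cols (incidence_mx S) *m x)|)%N.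
  move=> T_gt1 T_supp; apply: (leq_trans T_gt1).
  by apply/subset_leq_card/subsetP => i /T_supp; rewrite inE entry.
have [x0_0|x0_neq0] := eqVneq x0 0; have [x1_0|x1_neq0] := eqVneq x1 0.
- case/eqP: x_neq0; apply/matrixP => i j; rewrite ord1 mxE.
  by case: i => -[|[|//]] ?; [rewrite -x0_0 | rewrite -x1_0];
    congr (x _ _); apply: val_inj.
- apply: support_ge (col_gt1 b) _ => i; rewrite inE x0_0 => ->.
  by rewrite mulr0 add0r mul1r.
- apply: support_ge (col_gt1 a) _ => i; rewrite inE x1_0 => ->.
  by rewrite mulr0 addr0 mul1r.
- apply: support_ge (diff_gt1 a b _) _ => [|i]; first by rewrite inj_eq.
  rewrite inE; case: (S i a); case: (S i b) => //= _.
    by rewrite mul1r mul0r addr0.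
  by rewrite mul0r mul1r add0r.
Qed.

Lemma mul_incidence_mx m n (S : 'I_m -> 'I_n -> bool) (v : 'rV[F]_m) j :
  (v *m incidence_mx S) 0 j = \sum_(i | S i j) v 0 i.
Proof.
rewrite mxE [RHS]big_mkcond; apply: eq_bigr => i _.
by rewrite mxE; case: (S i j); rewrite ?mulr1 ?mulr0.
Qed.
End LinearAlgebra.

Section AontMatrix.
Variable F : fieldType.
Local Open Scope ring_scope.

Definition aont_mx n : 'M[F]_n.+1 :=
  incidence_mx F (fun i j : 'I_n.+1 => (i : nat) \in aont_supp n j).

Lemma aont_mx_unit n :
  (3%:R : F) != 0 -> odd n.+1 -> (2 < n)%N -> aont_mx n \in unitmx.
Proof.
move=> three_neq0 odd_n n_gt2.
rewrite -row_free_unit; apply/inj_row_free => v vM0.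
pose w k : F := v 0 (inord k).
have col_sum j : (j <= n)%N -> \sum_(k <- aont_supp n j) w k = 0.
  move=> jn; have /matrixP/(_ 0 (inord j)) := vM0.
  rewrite mul_incidence_mx mxE inordK // sum_ord_mem_nat ?aont_supp_uniq //.
  by move=> k; apply: aont_supp_le.
have step j : (j < n)%N -> w j.+1 = - w j.
  move=> jn; have := col_sum j (ltnW jn).
  rewrite /aont_supp ifN; last by apply/eqP; lia.
  by rewrite big_cons big_seq1 => /eqP; rewrite addrC addr_eq0 => /eqP.
have alt j : (j <= n)%N -> w j = (-1) ^+ j * w 0%N.
  elim: j => [|j IHj] jn; first by rewrite mul1r.
  by rewrite step // IHj ?(ltnW jn) // exprS mulN1r mulNr.
have w0 : w 0%N = 0.
  have w2 : w 2%N = w 0%N by rewrite (step 1%N) ?(step 0%N) ?opprK //; lia.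
  have wn : w n = w 0%N.
    by rewrite (alt n) // -signr_odd (negbTE (odd_n : ~~ odd n)) mul1r.
  have := col_sum n (leqnn n).
  rewrite /aont_supp eqxx !big_cons big_nil addr0 w2 wn.
  have -> : w 0%N + (w 0%N + w 0%N) = 3%:R * w 0%N.
    by rewrite mulr_natl !mulrS mulr0n addr0.
  by move/eqP; rewrite mulf_eq0 (negbTE three_neq0) => /eqP.
apply/rowP => i; rewrite [RHS]mxE.
by move: (alt i (ltn_ord i)); rewrite w0 mulr0 /w inord_val.
Qed.
End AontMatrix.

Lemma aont_mx_is_linear_AONT (F : finFieldType) n :
  (3%:R != 0 :> F)%R -> odd n.+1 -> 3 < n -> is_linear_AONT 2 n (aont_mx F n).
Proof.
move=> three_neq0 odd_n n_gt3; split; first by apply: aont_mx_unit => //; lia.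
move=> rows cols rows_inj cols_inj; rewrite mxsubrc.
apply: mxrank_rowsub_inj rows_inj _ => x x_neq0.
apply: card_support_incidence_colsub2 => // [j | j k].
  by apply: card_aont_supp_gt1; lia.
exact: card_aont_supp_diff_gt1.
Qed.

Theorem mainTheorem14 (s : nat) :
  odd s -> (5 <= s)%N ->
  exists M : 'M['F_2]_s, is_linear_AONT 2 s.-1 M.
Proof.
case: s => [//|n] odd_n n_ge4.
by exists (aont_mx _ n); apply: aont_mx_is_linear_AONT.
Qed.
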